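(* Let $R$ be a ring such that $\operatorname{Nil}^*(R)=0$ and $R$ satisfies Köthe's conjecture, and suppose that $xy\in\operatorname{Nil}(R)$ for all $x,y\in\operatorname{Nil}(R)$ with $x^2=0$. Let $r\in\mathbb{N}$ and $x_1,\ldots,x_r\in\operatorname{Nil}(R)$ with $x_1^n=0$ for some $n\in\mathbb{N}$. Then $$x_1^{n_1}x_2x_1^{n_2}x_3\cdots x_1^{n_{r-1}}x_rx_1^{n_r}=0$$ for all positive integers $n_1,\ldots,n_r$ with $n_1+\cdots+n_r\ge n$. In particular, $\operatorname{Nil}(R)$ is multiplicatively closed.
   Context: Rings are associative and not necessarily unital. $\operatorname{Nil}(R)$ is the set of nilpotent elements of $R$; $\operatorname{Nil}^*(R)$ is the upper nilradical, the sum of all nil two-sided ideals of $R$. $R$ satisfies Köthe's conjecture if every nil left ideal of $R$ is contained in a nil two-sided ideal. $\mathbb{N}$ denotes the positive integers. *)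

(* A (possibly non-unital) associative ring is encoded as an
   additive abelian group V : zmodType together with a multiplication
   [mul : V -> V -> V] assumed associative and bi-additive (distributive). *)
From HB Require Import structures.
From mathcomp Require Import all_boot all_order all_algebra.
Set Implicit Arguments. Unset Strict Implicit. Unset Printing Implicit Defensive.
Import GRing.Theory.
Local Open Scope ring_scope.

Section RngDefs.
Variables (V : zmodType) (mul : V -> V -> V).

Definition rng_axioms : Prop :=
  [/\ forall a b c, mul a (mul b c) = mul (mul a b) c,
      forall a b c, mul (a + b) c = mul a c + mul b c
    & forall a b c, mul a (b + c) = mul a b + mul a c].

(* positive powers: npow x k = x^k for k >= 1 (npow x 0 = 0 is a junk value,
   never used with k = 0 below) *)
Fixpoint npow (x : V) (k : nat) : V :=
  match k with
  | 0%N => 0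
  | 1%N => x
  | k'.+1 => mul (npow x k') x
  end.

Definition nilpotent (x : V) : Prop := exists k : nat, (0 < k)%N /\ npow x k = 0.

Definition nil_set (S : V -> Prop) : Prop := forall x, S x -> nilpotent x.

Definition additive_subgroup (S : V -> Prop) : Prop :=
  [/\ S 0, forall a b, S a -> S b -> S (a + b) & forall a, S a -> S (- a)].

Definition left_ideal (S : V -> Prop) : Prop :=
  additive_subgroup S /\ forall r a, S a -> S (mul r a).

Definition two_sided_ideal (S : V -> Prop) : Prop :=
  [/\ additive_subgroup S, forall r a, S a -> S (mul r a)
    & forall r a, S a -> S (mul a r)].

(* Nil^*(R): the sum of all nil two-sided ideals, i.e. the set of finite sums
   of elements each lying in some nil two-sided ideal. *)
Definition upper_nilradical (x : V) : Prop :=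
  exists s : seq V, x = \sum_(a <- s) a /\
    (forall a, a \in s -> exists I : V -> Prop,
        [/\ two_sided_ideal I, nil_set I & I a]).

Definition koethe : Prop :=
  forall L : V -> Prop, left_ideal L -> nil_set L ->
    exists I : V -> Prop, [/\ two_sided_ideal I, nil_set I & forall a, L a -> I a].

(* word k i = x_1^{n_i} x_{i+1} x_1^{n_{i+1}} x_{i+2} ... x_{i+k} x_1^{n_{i+k}} ;
   the word of the statement is  word (r-1) 1. *)
Fixpoint word (x : nat -> V) (ns : nat -> nat) (k i : nat) : V :=
  match k with
  | 0%N => npow (x 1%N) (ns i)
  | k'.+1 => mul (mul (npow (x 1%N) (ns i)) (x i.+1)) (word x ns k' i.+1)
  end.

End RngDefs.

(* A nilpotent z all of whose left multiples s z are nilpotent vanishes: R z is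
   a nil left ideal, hence zero by Koethe and Nil*(R) = 0, so z lies in the left
   annihilator of R, a left ideal with zero multiplication, hence again zero.
   The word w = X y B, with X = x_1^(n_1) and B the rest of the word, is handled
   by induction on its length: merging X into B gives a shorter word, so X B = 0
   by induction.  For any s, h = B s X then satisfies h h = 0, so y h is
   nilpotent by hypothesis, and rotating the products shows that s w is
   nilpotent; hence w = 0.  Taking x_1 = a, the other x_i = b and all n_i = 1
   gives (a b)^n = 0 whenever a^n = 0. *)
From mathcomp Require Import all_boot all_order all_algebra.
From mathcomp Require Import zify.
Set Implicit Arguments. Unset Strict Implicit. Unset Printing Implicit Defensive.
Import GRing.Theory.
Local Open Scope ring_scope.

Lemma big_nat_bump_first (ns : nat -> nat) (i m a : nat) : (i < m)%N ->
  (\sum_(i <= j < m) (if j == i then a + ns i else ns j) =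
   a + \sum_(i <= j < m) ns j)%N.
Proof.
move=> lt_im; rewrite big_ltn // [in RHS]big_ltn // eqxx addnA; congr (_ + _)%N.
by apply: eq_big_nat => j /andP [lt_ij _]; rewrite gtn_eqF.
Qed.

Section Rng.
Variables (V : zmodType) (mul : V -> V -> V).
Hypothesis mul_rng : rng_axioms mul.

Lemma mulA a b c : mul a (mul b c) = mul (mul a b) c.
Proof. by case: mul_rng. Qed.

Lemma mulDl a b c : mul (a + b) c = mul a c + mul b c.
Proof. by case: mul_rng. Qed.

Lemma mulDr a b c : mul a (b + c) = mul a b + mul a c.
Proof. by case: mul_rng. Qed.

Lemma mul0x a : mul 0 a = 0.
Proof. by apply: (addrI (mul 0 a)); rewrite -mulDl !addr0. Qed.

Lemma mulx0 a : mul a 0 = 0.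
Proof. by apply: (addrI (mul a 0)); rewrite -mulDr !addr0. Qed.

Lemma mulNx a b : mul (- a) b = - mul a b.
Proof. by apply: (addrI (mul a b)); rewrite -mulDl !subrr mul0x. Qed.

Lemma mulxN a b : mul a (- b) = - mul a b.
Proof. by apply: (addrI (mul a b)); rewrite -mulDr !subrr mulx0. Qed.

Lemma npowSr a k : npow mul a k.+2 = mul (npow mul a k.+1) a.
Proof. by []. Qed.

Lemma npowSl a k : npow mul a k.+2 = mul a (npow mul a k.+1).
Proof.
elim: k => [|k IHk] //.
by rewrite [LHS]npowSr [in LHS]IHk -mulA -npowSr.
Qed.

Lemma npowD a i j : (0 < i)%N -> (0 < j)%N ->
  npow mul a (i + j) = mul (npow mul a i) (npow mul a j).
Proof.
move=> i_gt0; elim: j => [|[|j] IHj] // _.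
  by rewrite addn1 -(prednK i_gt0).
by rewrite !addnS npowSr -addnS IHj // npowSr mulA.
Qed.

Lemma npow_eq0_le a n m : (0 < n)%N -> npow mul a n = 0 -> (n <= m)%N ->
  npow mul a m = 0.
Proof.
move=> n_gt0 an0 /subnKC <-; case: (m - n)%N => [|d]; first by rewrite addn0.
by rewrite npowD // an0 mul0x.
Qed.

Lemma npow_mul_rot a b k :
  npow mul (mul b a) k.+2 = mul (mul b (npow mul (mul a b) k.+1)) a.
Proof.
elim: k => [|k IHk]; first by rewrite /= !mulA.
by rewrite npowSr IHk (npowSr (mul a b)) !mulA.
Qed.

Lemma nilpotent_mulC a b : nilpotent mul (mul a b) -> nilpotent mul (mul b a).
Proof.
case=> [[|k]] [] // _ abk0; exists k.+2; split => //.
by rewrite npow_mul_rot abk0 mulx0 mul0x.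
Qed.

Lemma word_eq (x : nat -> V) k j ns ns' :
  (forall t, (j <= t)%N -> ns t = ns' t) -> word mul x ns k j = word mul x ns' k j.
Proof.
elim: k j => [|k IHk] j eq_ns /=; first by rewrite eq_ns.
by rewrite eq_ns // (IHk j.+1) // => t lt_jt; apply: eq_ns; lia.
Qed.

Lemma mul_npow_word (x : nat -> V) k j ns a : (0 < a)%N -> (0 < ns j)%N ->
  mul (npow mul (x 1%N) a) (word mul x ns k j)
  = word mul x (fun t => if t == j then (a + ns j)%N else ns t) k j.
Proof.
move=> a_gt0 nsj_gt0; case: k => [|k] /=; rewrite eqxx npowD //.
rewrite (@word_eq x k j.+1 _ ns) ?mulA // => t lt_jt.
by rewrite gtn_eqF.
Qed.

Lemma npow_mul_alternating_word (a b : V) k j : (0 < j)%N ->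
  npow mul (mul a b) k.+1 =
  mul (word mul (fun t => if t == 1%N then a else b) (fun=> 1%N) k j) b.
Proof.
elim: k j => [|k IHk] j j_gt0 //.
rewrite npowSl (IHk j.+1) //= mulA.
by case: j j_gt0.
Qed.

Section Koethe.
Hypothesis upper_nilradical_eq0 : forall x, upper_nilradical mul x -> x = 0.
Hypothesis mul_koethe : koethe mul.

Lemma nil_left_ideal_eq0 (L : V -> Prop) :
  left_ideal mul L -> nil_set mul L -> forall a, L a -> a = 0.
Proof.
move=> idL nilL a La; have [I [idI nilI LI]] := mul_koethe idL nilL.
apply: upper_nilradical_eq0; exists [:: a]; split; first by rewrite big_seq1.
by move=> b; rewrite inE => /eqP ->; exists I; split; auto.
Qed.

Lemma nilpotent_left_multiples_eq0 z :
  (forall s, nilpotent mul (mul s z)) -> z = 0.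
Proof.
move=> nil_sz.
have sz0 s : mul s z = 0.
  apply: (@nil_left_ideal_eq0 (fun w => exists t, w = mul t z)); last by exists s.
  - split; first split.
    + by exists 0; rewrite mul0x.
    + by move=> _ _ [t1 ->] [t2 ->]; exists (t1 + t2); rewrite mulDl.
    + by move=> _ [t ->]; exists (- t); rewrite mulNx.
    + by move=> r _ [t ->]; exists (mul r t); rewrite mulA.
  - by move=> _ [t ->].
apply: (@nil_left_ideal_eq0 (fun w => forall r, mul r w = 0)); last exact: sz0.
- split; first split.
  + by move=> r; rewrite mulx0.
  + by move=> a b a0 b0 r; rewrite mulDr a0 b0 addr0.
  + by move=> a a0 r; rewrite mulxN a0 oppr0.
  + by move=> r a a0 r'; rewrite mulA a0.
- by move=> w w0; exists 2%N; split; last exact: w0.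
Qed.

Hypothesis nilpotent_sqr0_mul : forall x y, nilpotent mul x -> nilpotent mul y ->
  mul x x = 0 -> nilpotent mul (mul x y).

Lemma word_eq0 (x : nat -> V) n : (0 < n)%N -> npow mul (x 1%N) n = 0 ->
  forall k i ns, (forall j, (i <= j <= i + k)%N -> (0 < ns j)%N) ->
  (forall j, (i < j <= i + k)%N -> nilpotent mul (x j)) ->
  (n <= \sum_(i <= j < i + k.+1) ns j)%N -> word mul x ns k i = 0.
Proof.
move=> n_gt0 xn0; elim=> [|k IHk] i ns ns_gt0 nil_x le_n_sum.
  by apply: (npow_eq0_le n_gt0 xn0); rewrite addn1 big_nat1 in le_n_sum.
apply: nilpotent_left_multiples_eq0 => s /=.
set X := npow mul (x 1%N) (ns i); set y := x i.+1; set B := word mul x ns k i.+1.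
have XB0 : mul X B = 0.
  rewrite /X /B mul_npow_word; [|by apply: ns_gt0; lia..].
  apply: IHk.
  - by move=> j ij; case: eqP => _; rewrite ?addn_gt0 ns_gt0 //; lia.
  - by move=> j ij; apply: nil_x; lia.
  - have lt_i : (i.+1 < i + k.+2)%N by lia.
    by rewrite big_nat_bump_first addSnnS // -big_ltn // ltnW.
set h := mul (mul B s) X.
have hh0 : mul h h = 0 by rewrite /h -!mulA (mulA X B) XB0 mul0x !mulx0.
have nil_h : nilpotent mul h by exists 2%N.
have nil_y : nilpotent mul y by apply: nil_x; lia.
move: (nilpotent_mulC (nilpotent_sqr0_mul nil_h nil_y hh0)).
have -> : mul y h = mul (mul y B) (mul s X) by rewrite /h !mulA.
by move/nilpotent_mulC; rewrite !mulA.
Qed.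

Lemma word_from1_eq0 (r : nat) (x : nat -> V) (n : nat) :
  (0 < r)%N -> (forall i, (1 <= i <= r)%N -> nilpotent mul (x i)) ->
  (0 < n)%N -> npow mul (x 1%N) n = 0 ->
  forall ns : nat -> nat, (forall i, (1 <= i <= r)%N -> (0 < ns i)%N) ->
  (n <= \sum_(1 <= i < r.+1) ns i)%N -> word mul x ns r.-1 1 = 0.
Proof.
case: r => [|r] // _ nil_x n_gt0 xn0 ns ns_gt0 le_n_sum.
apply: (word_eq0 n_gt0 xn0) => [j|j|]; rewrite ?add1n //.
- by move=> ij; apply: ns_gt0; lia.
- by move=> ij; apply: nil_x; lia.
Qed.

Lemma nilpotent_mul a b : nilpotent mul a -> nilpotent mul b ->
  nilpotent mul (mul a b).
Proof.
move=> nil_a nil_b; have [n [n_gt0 an0]] := nil_a; exists n; split => //.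
pose x t := if t == 1%N then a else b.
have w0 : word mul x (fun=> 1%N) n.-1 1 = 0.
  apply: (word_from1_eq0 (n := n)) => //; first by move=> i _; rewrite /x; case: eqP.
  by rewrite sum_nat_const_nat subSS subn0 muln1.
by rewrite -(prednK n_gt0) (npow_mul_alternating_word a b _ (j := 1)) // w0 mul0x.
Qed.

End Koethe.
End Rng.

Theorem lemma2p4 (V : zmodType) (mul : V -> V -> V) :
  rng_axioms mul ->
  (forall x, upper_nilradical mul x -> x = 0) ->
  koethe mul ->
  (forall x y, nilpotent mul x -> nilpotent mul y -> mul x x = 0 ->
     nilpotent mul (mul x y)) ->
  (forall (r : nat) (x : nat -> V) (n : nat),
     (0 < r)%N ->
     (forall i, (1 <= i <= r)%N -> nilpotent mul (x i)) ->
     (0 < n)%N -> npow mul (x 1%N) n = 0 ->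
     forall ns : nat -> nat,
       (forall i, (1 <= i <= r)%N -> (0 < ns i)%N) ->
       (n <= \sum_(1 <= i < r.+1) ns i)%N ->
       word mul x ns r.-1 1 = 0)
  /\ (forall a b, nilpotent mul a -> nilpotent mul b -> nilpotent mul (mul a b)).
Proof.
move=> mul_rng nilrad0 koe sqr0; split.
- exact: word_from1_eq0.
- exact: nilpotent_mul.
Qed.
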